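(* Let $\mathcal X=\{X_1,\dots,X_n\}$ be a multi-set of real symmetric $2\times2$ matrices and $S=\lim_{m\to\infty}\frac1m\log\sum_{i=1}^n\exp(mX_i)$ its log-exp-supremum. Then $S$ is an upper bound of $\mathcal X$ in the Loewner order, i.e. $X_j\le_{\mathrm L}S$ for all $j\in\{1,\dots,n\}$.
   Context: For real symmetric matrices $A,B$, $A\le_{\mathrm L}B$ (Loewner order) means that $B-A$ is positive semidefinite. $\exp$ and $\log$ denote the matrix exponential and matrix logarithm. *)

From HB Require Import structures.
From mathcomp Require Import all_boot all_order all_algebra.
From mathcomp Require Import all_classical all_reals all_analysis.
Set Implicit Arguments. Unset Strict Implicit. Unset Printing Implicit Defensive.
Import Order.TTheory GRing.Theory Num.Theory.
Import numFieldNormedType.Exports.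
Local Open Scope classical_set_scope.
Local Open Scope ring_scope.

Definition symmx (R : realType) (n : nat) (A : 'M[R]_n) : Prop := A^T = A.

Definition psdmx (R : realType) (n : nat) (A : 'M[R]_n) : Prop :=
  symmx A /\ forall v : 'rV[R]_n, 0 <= (v *m A *m v^T) 0 0.

Definition loewner_le (R : realType) (n : nat) (A B : 'M[R]_n) : Prop :=
  psdmx (B - A).

Definition mexp (R : realType) (n : nat) (A : 'M[R]_n.+1) : 'M[R]_n.+1 :=
  lim (series (fun k : nat => (k`!%:R)^-1 *: A ^+ k) @ \oo).

(* matrix logarithm (of a symmetric positive definite matrix): the unique
   real symmetric matrix L with exp L = M (chosen classically; defaults to 0
   when no such L exists). *)
Definition mlog (R : realType) (n : nat) (M : 'M[R]_n.+1) : 'M[R]_n.+1 :=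
  xget 0 [set L : 'M[R]_n.+1 | symmx L /\ mexp L = M].

(* Put M_m := \sum_i exp (m X_i).  Since M_m - exp (m X_j) is positive
   semidefinite and log is operator monotone, log M_m >= m X_j; dividing by m
   and passing to the limit gives S >= X_j, the psd cone being closed.
   In dimension 2 everything is computed through an explicit spectral
   decomposition.  Monotonicity of log follows from that of the square root
   (if A, B > 0 and A^2 >= B^2, then each eigenvalue c of A - B satisfies
   c (z A z^T + z B z^T) = z (A^2 - B^2) z^T >= 0) applied to
   exp (L / 2^t) >= exp (Y / 2^t), followed by a first-order expansion of
   both sides as t tends to infinity. *)

From HB Require Import structures.
From mathcomp Require Import all_boot all_order all_algebra.
From mathcomp Require Import all_classical all_reals all_analysis.
From mathcomp Require Import ring lra.
Import Order.TTheory GRing.Theory Num.Theory.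
Import numFieldNormedType.Exports.
Local Open Scope classical_set_scope.
Local Open Scope ring_scope.

Section Loewner.
Context {R : realType}.

Definition qform {n} (v : 'rV[R]_n) (A : 'M[R]_n) : R := (v *m A *m v^T) 0 0.

Definition pdmx {n} (A : 'M[R]_n) : Prop :=
  symmx A /\ forall z : 'rV[R]_n, z *m z^T = 1 -> 0 < qform z A.

Section GeneralDimension.
Context {n : nat}.
Implicit Types (A B : 'M[R]_n) (u v : 'rV[R]_n).

Lemma qformD v A B : qform v (A + B) = qform v A + qform v B.
Proof. by rewrite /qform mulmxDr mulmxDl mxE. Qed.

Lemma qformZ v c A : qform v (c *: A) = c * qform v A.
Proof. by rewrite /qform -scalemxAr -scalemxAl mxE. Qed.

Lemma qformB v A B : qform v (A - B) = qform v A - qform v B.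
Proof. by rewrite qformD -scaleN1r qformZ mulN1r. Qed.

Lemma qform_outer v u : qform v (u^T *m u) = (v *m u^T) 0 0 ^+ 2.
Proof.
have uv : u *m v^T = (v *m u^T)^T by rewrite trmx_mul trmxK.
by rewrite /qform mulmxA -mulmxA uv [LHS]mxE big_ord1 [_^T _ _]mxE expr2.
Qed.

Lemma qform_cvg (F : nat -> 'M[R]_n) S v :
  F @ \oo --> S -> (fun m => qform v (F m)) @ \oo --> qform v S.
Proof.
move=> FS; rewrite /qform.
have qformE A : (v *m A *m v^T) 0 0 = \sum_j \sum_i v 0 i * A i j * v 0 j.
  rewrite mxE; apply: eq_bigr => j _; rewrite mxE mulr_suml.
  by apply: eq_bigr => i _; rewrite !mxE.
under eq_fun do rewrite qformE.
rewrite qformE; apply: (cvg_big add_continuous) => // j _.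
apply: (cvg_big add_continuous) => // i _.
apply: cvgMr_tmp; apply: cvgMl_tmp.
exact: continuous_cvg (@coord_continuous R n n i j S) FS.
Qed.

Lemma symmxB {A B} : symmx A -> symmx B -> symmx (A - B).
Proof. by move=> sA sB; rewrite /symmx linearB /= sA sB. Qed.

Lemma symmxZ c A : symmx A -> symmx (c *: A).
Proof. by move=> sA; rewrite /symmx linearZ /= sA. Qed.

Lemma psdmx0 : psdmx (0 : 'M[R]_n).
Proof. by split=> [|v]; rewrite ?/symmx ?trmx0 // mulmx0 mul0mx mxE. Qed.

Lemma psdmxD {A B} : psdmx A -> psdmx B -> psdmx (A + B).
Proof.
move=> [sA qA] [sB qB]; split=> [|v]; first by rewrite /symmx linearD /= sA sB.
by rewrite -/(qform _ _) qformD addr_ge0 ?qA ?qB.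
Qed.

Lemma psdmxZ {c A} : 0 <= c -> psdmx A -> psdmx (c *: A).
Proof.
move=> c0 [sA qA]; split=> [|v]; first exact: symmxZ.
by rewrite -/(qform _ _) qformZ mulr_ge0 ?qA.
Qed.

Lemma pdmxD {A B} : pdmx A -> psdmx B -> pdmx (A + B).
Proof.
move=> [sA qA] [sB qB]; split=> [|z z1]; first by rewrite /symmx linearD /= sA sB.
by rewrite qformD ltr_wpDr ?qA ?qB.
Qed.

Lemma psdmx_cvg (F : nat -> 'M[R]_n) S :
  F @ \oo --> S -> (\forall m \near \oo, psdmx (F m)) -> psdmx S.
Proof.
move=> FS psdF; split=> [|v].
  apply/matrixP => a b; rewrite mxE; apply/eqP; rewrite -subr_eq0 eq_le.
  have coordF c d : (fun m => F m c d) @ \oo --> S c d.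
    exact: continuous_cvg (@coord_continuous R n n c d S) FS.
  have FSab : (fun m => F m b a - F m a b) @ \oo --> S b a - S a b.
    exact: cvgB.
  have symF : \forall m \near \oo, F m b a - F m a b = 0.
    by apply: filterS psdF => m [sFm _]; rewrite -[in F m b a]sFm mxE subrr.
  by rewrite (cvgr_to_le FSab) ?(cvgr_to_ge FSab) //; apply: filterS symF => m ->.
have qformF : (fun m => qform v (F m)) @ \oo --> qform v S by exact: qform_cvg.
by apply: (cvgr_to_ge qformF); apply: filterS psdF => m [_]; apply.
Qed.

(* If [z] is an eigenvector of [A - B] for [c], then
   [z (A^2 - B^2) z^T = z (A (A - B) + (A - B) B) z^T = c (z A z^T + z B z^T)]. *)
Lemma eigen_subr_ge0 {A B z c} :
  symmx (A - B) -> z *m (A - B) = c *: z ->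
  0 < qform z A -> 0 < qform z B -> 0 <= qform z (A *m A - B *m B) -> 0 <= c.
Proof.
move=> sC ez zA zB.
have -> : A *m A - B *m B = A *m (A - B) + (A - B) *m B.
  by rewrite mulmxBr mulmxBl addrA subrK.
have ezT : (A - B) *m z^T = c *: z^T by rewrite -sC -trmx_mul ez linearZ.
have qAC : qform z (A *m (A - B)) = c * qform z A.
  by rewrite /qform mulmxA -[_ *m (A - B) *m _]mulmxA ezT -scalemxAr mxE.
have qCB : qform z ((A - B) *m B) = c * qform z B.
  by rewrite /qform mulmxA ez -!scalemxAl mxE.
rewrite qformD qAC qCB -mulrDr; nra.
Qed.

End GeneralDimension.

Definition orthonormal2 (u1 u2 : 'rV[R]_2) : Prop :=
  [/\ u1 *m u1^T = 1, u2 *m u2^T = 1, u1 *m u2^T = 0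
    & u1^T *m u1 + u2^T *m u2 = 1].

Definition spmx (l1 l2 : R) (u1 u2 : 'rV[R]_2) : 'M[R]_2 :=
  l1 *: (u1^T *m u1) + l2 *: (u2^T *m u2).

Section SpectralMatrices.

Lemma spmxZ (c l1 l2 : R) (u1 u2 : 'rV[R]_2) : c *: spmx l1 l2 u1 u2 = spmx (c * l1) (c * l2) u1 u2.
Proof. by rewrite /spmx scalerDr !scalerA. Qed.

Lemma spmx_sum (r : seq nat) (F G : nat -> R) (u1 u2 : 'rV[R]_2) :
  \sum_(i <- r) spmx (F i) (G i) u1 u2 =
  spmx (\sum_(i <- r) F i) (\sum_(i <- r) G i) u1 u2.
Proof. by rewrite /spmx big_split /= -!scaler_suml. Qed.

Lemma symmx_spmx (l1 l2 : R) (u1 u2 : 'rV[R]_2) : symmx (spmx l1 l2 u1 u2).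
Proof. by rewrite /symmx /spmx linearD !linearZ /= !trmx_mul !trmxK. Qed.

Lemma qform_spmx (v u1 u2 : 'rV[R]_2) (l1 l2 : R) :
  qform v (spmx l1 l2 u1 u2) = l1 * (v *m u1^T) 0 0 ^+ 2 + l2 * (v *m u2^T) 0 0 ^+ 2.
Proof. by rewrite qformD !qformZ !qform_outer. Qed.

Lemma psdmx_spmx (l1 l2 : R) (u1 u2 : 'rV[R]_2) : 0 <= l1 -> 0 <= l2 -> psdmx (spmx l1 l2 u1 u2).
Proof.
move=> l1_ge0 l2_ge0; split=> [|v]; first exact: symmx_spmx.
by rewrite -/(qform _ _) qform_spmx addr_ge0 // mulr_ge0 // sqr_ge0.
Qed.

Lemma cvg_spmx (s1 s2 : nat -> R) (l1 l2 : R) (u1 u2 : 'rV[R]_2) :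
  s1 @ \oo --> l1 -> s2 @ \oo --> l2 ->
  (fun m => spmx (s1 m) (s2 m) u1 u2) @ \oo --> spmx l1 l2 u1 u2.
Proof. by move=> s1l1 s2l2; apply: cvgD; apply: cvgZr_tmp. Qed.

Variables u1 u2 : 'rV[R]_2.
Hypothesis u12 : orthonormal2 u1 u2.

Lemma orthonormal2_21 : u2 *m u1^T = 0.
Proof. by case: u12 => _ _ h _; rewrite -[u2 *m _]trmxK trmx_mul trmxK h trmx0. Qed.

Lemma spmxM (a1 a2 b1 b2 : R) :
  spmx a1 a2 u1 u2 *m spmx b1 b2 u1 u2 = spmx (a1 * b1) (a2 * b2) u1 u2.
Proof.
have u21 := orthonormal2_21; case: u12 => u11 u22 u12' _.
have outerM (u v w : 'rV[R]_2) : (u^T *m v) *m (w^T *m w) = u^T *m (v *m w^T) *m w.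
  by rewrite !mulmxA.
rewrite /spmx mulmxDl !mulmxDr -!scalemxAl -!scalemxAr !scalerA !outerM.
by rewrite u11 u22 u12' u21 !mulmx0 !mul0mx !scaler0 addr0 add0r !mulmx1.
Qed.

Lemma spmx11 : spmx 1 1 u1 u2 = 1.
Proof. by case: u12 => _ _ _ h; rewrite /spmx !scale1r. Qed.

Lemma spmxX (l1 l2 : R) k : spmx l1 l2 u1 u2 ^+ k = spmx (l1 ^+ k) (l2 ^+ k) u1 u2.
Proof.
elim: k => [|k IHk]; first by rewrite !expr0 spmx11.
by rewrite exprS IHk -mulmxE spmxM -!exprS.
Qed.

Lemma qform1_spmx (v : 'rV[R]_2) : (v *m u1^T) 0 0 ^+ 2 + (v *m u2^T) 0 0 ^+ 2 = qform v 1.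
Proof. by rewrite -spmx11 qform_spmx !mul1r. Qed.

Lemma spmx_eigen1 (l1 l2 : R) : u1 *m spmx l1 l2 u1 u2 = l1 *: u1.
Proof.
case: u12 => u11 _ u12' _.
by rewrite /spmx mulmxDr -!scalemxAr !mulmxA u11 u12' mul0mx scaler0 addr0 mul1mx.
Qed.

Lemma spmx_eigen2 (l1 l2 : R) : u2 *m spmx l1 l2 u1 u2 = l2 *: u2.
Proof.
have u21 := orthonormal2_21; case: u12 => _ u22 _ _.
by rewrite /spmx mulmxDr -!scalemxAr !mulmxA u22 u21 mul0mx scaler0 add0r mul1mx.
Qed.

Lemma spmx_of_eigen (A : 'M[R]_2) (l1 l2 : R) :
  u1 *m A = l1 *: u1 -> u2 *m A = l2 *: u2 -> A = spmx l1 l2 u1 u2.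
Proof.
case: u12 => _ _ _ u12T e1 e2.
have -> : A = (u1^T *m u1 + u2^T *m u2) *m A by rewrite u12T mul1mx.
by rewrite mulmxDl -!mulmxA e1 e2 /spmx -!scalemxAr.
Qed.

Lemma pdmx_spmx (l1 l2 : R) : 0 < l1 -> 0 < l2 -> pdmx (spmx l1 l2 u1 u2).
Proof.
move=> l1_gt0 l2_gt0; split=> [|z zz]; first exact: symmx_spmx.
rewrite qform_spmx.
set a := (z *m u1^T) 0 0 ^+ 2; set b := (z *m u2^T) 0 0 ^+ 2.
have ab1 : a + b = 1 by rewrite qform1_spmx /qform mulmx1 zz mxE.
have [a0|a_neq0] := eqVneq a 0.
  by move: ab1; rewrite a0 mulr0 !add0r => ->; rewrite mulr1.
have a_gt0 : 0 < a by rewrite lt0r a_neq0 sqr_ge0.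
by apply: ltr_pwDl; [exact: mulr_gt0 | exact: mulr_ge0 (ltW l2_gt0) (sqr_ge0 _)].
Qed.

Lemma mexp_spmx (l1 l2 : R) : mexp (spmx l1 l2 u1 u2) = spmx (expR l1) (expR l2) u1 u2.
Proof.
rewrite /mexp; apply: cvg_lim => //.
have -> : series (fun k : nat => (k`!%:R)^-1 *: spmx l1 l2 u1 u2 ^+ k) =
    (fun m => spmx (series (exp_coeff l1) m) (series (exp_coeff l2) m) u1 u2).
  apply/funext => m; rewrite /series /= -spmx_sum; apply: eq_bigr => k _.
  by rewrite spmxX spmxZ /exp_coeff ![_^-1 * _]mulrC.
by apply: cvg_spmx; exact: is_cvg_series_exp_coeff.
Qed.

End SpectralMatrices.

Definition rv2 (x y : R) : 'rV[R]_2 := \row_(j < 2) (if j == ord0 then x else y).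

Lemma sum_ord2 (F : 'I_2 -> R) : \sum_(i < 2) F i = F 0 + F 1.
Proof. by rewrite !big_ord_recl big_ord0 addr0; congr (F _ + F _); apply/val_inj. Qed.

Lemma orthonormal2_rv2 (x y : R) :
  x ^+ 2 + y ^+ 2 = 1 -> orthonormal2 (rv2 x y) (rv2 (- y) x).
Proof.
move=> xy1; split; apply/matrixP => i j; rewrite !mxE ?sum_ord2 ?big_ord1 !mxE /=.
- by rewrite [i]ord1 [j]ord1 eqxx mulr1n -!expr2.
- by rewrite [i]ord1 [j]ord1 eqxx mulr1n -!expr2 sqrrN addrC.
- by ring.
- by case: i => [[|[|i]] ?]; case: j => [[|[|j]] ?] //=; rewrite ?mulr1n ?mulr0n; nra.
Qed.

Lemma rv2_eigen (A : 'M[R]_2) (x y l : R) :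
  x * A 0 0 + y * A 1 0 = l * x -> x * A 0 1 + y * A 1 1 = l * y ->
  rv2 x y *m A = l *: rv2 x y.
Proof.
move=> e0 e1; apply/matrixP => i j; rewrite !mxE sum_ord2 !mxE /=.
by case: j => [[|[|j]] ?] //=; [rewrite (_ : Ordinal _ = 0) | rewrite (_ : Ordinal _ = 1)];
  try apply/val_inj.
Qed.

(* For [b != 0], the eigenvector of [[a, b], [b, c]] for the larger root [l]
   of its characteristic polynomial is proportional to [(b, l - a)]. *)
Lemma sym2_eigenvector (a b c : R) :
  exists x y l, [/\ x ^+ 2 + y ^+ 2 = 1, x * a + y * b = l * x & x * b + y * c = l * y].
Proof.
have [b0|b_neq0] := eqVneq b 0.
  by exists 1, 0, a; rewrite b0 expr1n expr0n addr0; split; ring.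
set r := Num.sqrt (((a - c) / 2) ^+ 2 + b ^+ 2).
have r2 : r ^+ 2 = ((a - c) / 2) ^+ 2 + b ^+ 2 by rewrite sqr_sqrtr ?addr_ge0 ?sqr_ge0.
set l := (a + c) / 2 + r.
set d := Num.sqrt (b ^+ 2 + (l - a) ^+ 2).
have b2_gt0 : 0 < b ^+ 2 by rewrite exprn_even_gt0.
have d2 : d ^+ 2 = b ^+ 2 + (l - a) ^+ 2 by rewrite sqr_sqrtr ?addr_ge0 ?sqr_ge0.
have d_neq0 : d != 0 by rewrite gt_eqF // sqrtr_gt0 ltr_wpDr ?sqr_ge0.
have charpoly : b * b + (l - a) * c = l * (l - a) by rewrite /l; nra.
exists (b / d), ((l - a) / d), l; split.
- by rewrite !expr_div_n -mulrDl -d2 divff // expf_neq0.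
- by field.
- transitivity ((b * b + (l - a) * c) / d); first by field.
  by rewrite charpoly; field.
Qed.

Lemma symmx2_spectral {A : 'M[R]_2} : symmx A ->
  exists l1 l2 u1 u2, orthonormal2 u1 u2 /\ A = spmx l1 l2 u1 u2.
Proof.
move=> sA; have A10 : A 1 0 = A 0 1 by rewrite -[in RHS]sA mxE.
have [x [y [l [xy1 e0 e1]]]] := sym2_eigenvector (A 0 0) (A 0 1) (A 1 1).
have u12 := orthonormal2_rv2 _ _ xy1.
exists l, (A 0 0 + A 1 1 - l), (rv2 x y), (rv2 (- y) x); split => //.
by apply: spmx_of_eigen => //; apply: rv2_eigen; rewrite ?A10 //; nra.
Qed.

Lemma loewner_le_of_sqr {A B : 'M[R]_2} :
  pdmx A -> pdmx B -> loewner_le (B *m B) (A *m A) -> loewner_le B A.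
Proof.
move=> [sA pA] [sB pB] [_ qAB]; have sAB := symmxB sA sB.
have [c1 [c2 [z1 [z2 [z12 eAB]]]]] := symmx2_spectral sAB.
have [z11 z22 _ _] := z12.
rewrite /loewner_le eAB; apply: psdmx_spmx.
- apply: (eigen_subr_ge0 sAB _ (pA _ z11) (pB _ z11) (qAB z1)).
  by rewrite eAB spmx_eigen1.
- apply: (eigen_subr_ge0 sAB _ (pA _ z22) (pB _ z22) (qAB z2)).
  by rewrite eAB spmx_eigen2.
Qed.

Lemma expR_le1DxexpR (x : R) : expR x <= 1 + x * expR x.
Proof.
have e_gt0 := expR_gt0 x; have := expR_ge1Dx (- x); rewrite expRN => ex.
have : (1 - x) * expR x <= 1 by rewrite -[X in _ <= X](mulVf (lt0r_neq0 e_gt0)) ler_pM2r.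
lra.
Qed.

Lemma cvg_expR_scale (x : R) (h : nat -> R) :
  h @ \oo --> 0 -> (fun t => expR (x * h t)) @ \oo --> (1 : R).
Proof.
move=> h0; rewrite -expR0 -(mulr0 x).
by apply: (continuous_cvg _ (@continuous_expR R _)); apply: cvgMl_tmp.
Qed.

(* Differentiate at [0] the inequality between the two sums of exponentials:
   [expR] lies between [1 + z] and [1 + z expR z], and [h t] is positive. *)
Lemma ler_lin_of_ler_expR (a1 a2 b1 b2 x1 x2 y1 y2 : R) (h : nat -> R) :
  0 <= a1 -> 0 <= a2 -> 0 <= b1 -> 0 <= b2 -> b1 + b2 = a1 + a2 ->
  (forall t, 0 < h t) -> h @ \oo --> 0 ->
  (forall t, expR (y1 * h t) * b1 + expR (y2 * h t) * b2 <=
             expR (x1 * h t) * a1 + expR (x2 * h t) * a2) ->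
  y1 * b1 + y2 * b2 <= x1 * a1 + x2 * a2.
Proof.
move=> a1_ge0 a2_ge0 b1_ge0 b2_ge0 ab h_gt0 h0 le_exp.
have slope t : y1 * b1 + y2 * b2 <=
    x1 * a1 * expR (x1 * h t) + x2 * a2 * expR (x2 * h t).
  have := le_exp t; have ht := h_gt0 t.
  have := expR_le1DxexpR (x1 * h t); have := expR_le1DxexpR (x2 * h t).
  have := expR_ge1Dx (y1 * h t); have := expR_ge1Dx (y2 * h t).
  move: (expR (x1 * h t)) (expR (x2 * h t)) (expR (y1 * h t)) (expR (y2 * h t)).
  move=> e1 e2 f1 f2 f2_ge f1_ge e2_le e1_le le_ef.
  have : 0 <= h t * (x1 * a1 * e1 + x2 * a2 * e2 - (y1 * b1 + y2 * b2)) by nra.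
  by rewrite pmulr_rge0 // subr_ge0.
have lim_slope : (fun t => x1 * a1 * expR (x1 * h t) + x2 * a2 * expR (x2 * h t))
    @ \oo --> x1 * a1 + x2 * a2.
  rewrite -[X in _ --> X + _]mulr1 -[X in _ --> _ + X]mulr1.
  by apply: cvgD; apply: cvgMl_tmp; apply: cvg_expR_scale.
by apply: (cvgr_to_ge lim_slope); apply: nearW.
Qed.

(* The Loewner order is reflected by [mexp]: take square roots repeatedly to get
   [mexp (Y / 2^t) <= mexp (L / 2^t)], then let [t] go to infinity. *)
Lemma loewner_le_of_mexp {Y L : 'M[R]_2} :
  symmx Y -> symmx L -> loewner_le (mexp Y) (mexp L) -> loewner_le Y L.
Proof.
move=> /symmx2_spectral [y1 [y2 [w1 [w2 [w12 ->]]]]].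
move=> /symmx2_spectral [x1 [x2 [u1 [u2 [u12 ->]]]]].
rewrite !mexp_spmx // => le_exp.
pose h t : R := 2^-1 ^+ t.
have h_gt0 t : 0 < h t by rewrite exprn_gt0 // invr_gt0 ltr0n.
have expR_halve (z : R) t : expR (z * h t.+1) ^+ 2 = expR (z * h t).
  by rewrite expr2 -expRD /h exprS; congr expR; field.
have le_exp_h t : loewner_le (spmx (expR (y1 * h t)) (expR (y2 * h t)) w1 w2)
    (spmx (expR (x1 * h t)) (expR (x2 * h t)) u1 u2).
  elim: t => [|t IHt]; first by rewrite /h expr0 !mulr1.
  apply: loewner_le_of_sqr; try by apply: pdmx_spmx => //; exact: expR_gt0.
  by rewrite !spmxM // -!expr2 !expR_halve.
split; first exact: symmxB (symmx_spmx _ _ _ _) (symmx_spmx _ _ _ _).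
move=> v; rewrite -/(qform _ _) qformB !qform_spmx subr_ge0.
apply: (@ler_lin_of_ler_expR _ _ _ _ _ _ _ _ h); rewrite ?sqr_ge0 //.
- by rewrite !qform1_spmx.
- by apply: cvg_expr; rewrite ger0_norm ?invr_ge0 ?ler0n // invf_lt1 // ltr1n.
- move=> t; have [_ /(_ v)] := le_exp_h t.
  by rewrite -/(qform _ _) qformB !qform_spmx subr_ge0.
Qed.

Lemma pdmx_mexp {X : 'M[R]_2} : symmx X -> pdmx (mexp X).
Proof.
move=> /symmx2_spectral [l1 [l2 [u1 [u2 [u12 ->]]]]].
by rewrite mexp_spmx //; apply: pdmx_spmx => //; exact: expR_gt0.
Qed.

Lemma mlogK {M : 'M[R]_2} : pdmx M -> symmx (mlog M) /\ mexp (mlog M) = M.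
Proof.
move=> [sM pM]; have [m1 [m2 [z1 [z2 [z12 eM]]]]] := symmx2_spectral sM.
have [z11 z22 _ _] := z12.
have qform_eigen z m : z *m z^T = 1 -> z *m M = m *: z -> qform z M = m.
  by move=> zz ez; rewrite /qform ez -scalemxAl zz !mxE eqxx mulr1.
have m1_gt0 : 0 < m1.
  by rewrite -(qform_eigen z1 m1 z11) ?pM // eM spmx_eigen1.
have m2_gt0 : 0 < m2.
  by rewrite -(qform_eigen z2 m2 z22) ?pM // eM spmx_eigen2.
suff logM : exists L, [set L : 'M[R]_2 | symmx L /\ mexp L = M] L.
  by have := xgetPex 0 logM.
exists (spmx (ln m1) (ln m2) z1 z2).
by split; [exact: symmx_spmx | rewrite mexp_spmx // !lnK ?posrE].
Qed.

Lemma psdmx_mexp {X : 'M[R]_2} : symmx X -> psdmx (mexp X).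
Proof.
move=> /symmx2_spectral [l1 [l2 [u1 [u2 [u12 ->]]]]].
by rewrite mexp_spmx //; apply: psdmx_spmx; exact/ltW/expR_gt0.
Qed.

Lemma loewner_le_mlog_sum_mexp {n} (X : 'I_n -> 'M[R]_2) j :
  (forall i, symmx (X i)) -> loewner_le (X j) (mlog (\sum_(i < n) mexp (X i))).
Proof.
move=> sX; set rest := \sum_(i < n | i != j) mexp (X i).
have psd_rest : psdmx rest.
  by apply: big_ind => [|A B|i _]; [exact: psdmx0 | exact: psdmxD | exact: psdmx_mexp].
have sum_split : \sum_(i < n) mexp (X i) = mexp (X j) + rest by rewrite (bigD1 j).
have [sL expL] := mlogK (pdmxD (pdmx_mexp (sX j)) psd_rest).
apply: loewner_le_of_mexp; rewrite ?sum_split //.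
by rewrite /loewner_le expL addrC addKr.
Qed.

End Loewner.

Theorem lemma6 (R : realType) (n : nat) (X : 'I_n -> 'M[R]_2) (S : 'M[R]_2) :
  (forall i, symmx (X i)) ->
  (fun m : nat => (m%:R)^-1 *: mlog (\sum_(i < n) mexp (m%:R *: X i))) @ \oo --> S ->
  forall j : 'I_n, loewner_le (X j) S.
Proof.
move=> sX FS j.
apply: (@psdmx_cvg _ _ (fun m => (m%:R)^-1 *: mlog (\sum_(i < n) mexp (m%:R *: X i)) - X j)).
  by apply: cvgB => //; exact: cvg_cst.
exists 1%N => // m /= m_gt0.
have m_neq0 : (m%:R : R) != 0 by rewrite pnatr_eq0 -lt0n.
rewrite -[X j]scale1r -[k in k *: X j](mulVf m_neq0) -scalerA -scalerBr.
apply: psdmxZ; first by rewrite invr_ge0 ler0n.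
exact: (loewner_le_mlog_sum_mexp (fun i => m%:R *: X i) j (fun i => symmxZ m%:R _ (sX i))).
Qed.
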